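(* Let $G$ be a simple graph with $m$ edges and $W$ wedges, let $\mathcal{S}$ be a fixed subset of the wedges of $G$, let $\mathcal{R}=(r_1,\dots,r_s)$ be $s$ independent uniformly random edges of $G$, and let $X$ be the number of index pairs $i<j$ with $\{r_i,r_j\}\in\mathcal{S}$. If $W\ge m$ and $s\ge m/\sqrt{W}$, then $\mathrm{Var}[X] \le 18\, s^3 W^{3/2}/m^3$.
   Context: A wedge is a path of length 2 in $G$, i.e. an unordered pair of distinct edges sharing exactly one vertex; $W$ denotes the total number of wedges of $G$. *)

From HB Require Import structures.
From mathcomp Require Import all_boot all_order all_algebra.
Set Implicit Arguments. Unset Strict Implicit. Unset Printing Implicit Defensive.
Import Order.TTheory GRing.Theory Num.Theory.

(* A simple graph on a finite vertex type V is a symmetric irreflexive rel. *)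

Definition edges (V : finType) (e : rel V) : {set {set V}} :=
  [set A | [exists x, exists y, e x y && (A == [set x; y])]].

Definition wedges (V : finType) (e : rel V) : {set {set {set V}}} :=
  [set P | [exists A in edges e, exists B in edges e,
     [&& A != B, #|A :&: B| == 1%N & P == [set A; B]]]].

(* Sample space: all s-tuples (r_1,...,r_s) of edges; uniform measure on it
   models s independent uniformly random edges. *)
Definition samples (V : finType) (e : rel V) (s : nat) : {set {ffun 'I_s -> {set V}}} :=
  [set r : {ffun 'I_s -> {set V}} | [forall i, r i \in edges e]].

Definition Xcount (V : finType) (s : nat) (S : {set {set {set V}}})
    (r : {ffun 'I_s -> {set V}}) : nat :=
  #|[set ij : 'I_s * 'I_s | (ij.1 < ij.2)%N && ([set r ij.1; r ij.2] \in S)]|.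

Definition expect (R : numFieldType) (V : finType) (e : rel V) (s : nat)
    (f : {ffun 'I_s -> {set V}} -> R) : R :=
  ((\sum_(r in samples e s) f r) / (#|samples e s|)%:R)%R.

Definition varX (R : numFieldType) (V : finType) (e : rel V) (s : nat)
    (S : {set {set {set V}}}) : R :=
  (expect e (fun r : {ffun 'I_s -> {set V}} => ((Xcount S r)%:R) ^+ 2)
   - (expect e (fun r : {ffun 'I_s -> {set V}} => (Xcount S r)%:R)) ^+ 2)%R.

(* Write X = sum_{i<j} Y_ij, where Y_ij indicates {r_i, r_j} in S, so that
   Var X = sum_{P,Q} Cov(Y_P, Y_Q).  Sampling r uniformly in E^s makes the
   coordinates independent and uniform (expect_coord), which gives
   - Cov(Y_P, Y_Q) = 0 when P and Q are disjoint;
   - E[Y_P^2] = E[Y_P] = (sum_a d_S(a)) / m^2 <= 2W / m^2;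
   - E[Y_P Y_Q] = (sum_a d_S(a)^2) / m^3 when P, Q share one index,
   where d_S(a) counts the edges b with {a, b} in S.  Each P meets 4s pairs Q,
   so Var X <= s^2 (2W/m^2) + 4 s^3 (sum_a d_S(a)^2)/m^3 (varX_le).
   The combinatorial core (nbr_sq_le) is d_S(a)^2 <= 4W: the S-neighbours of
   a = {u, v} through u, squared, inject into ordered wedges centred at u, and
   wedges centred at u and at v are distinct.  Hence sum_a d_S(a)^2 <= 4 W sqrt W,
   and m <= s sqrt W turns the bound into 18 s^3 W^(3/2) / m^3.
   The file treats the graph, then the sampling, then the moments, and ends
   with the theorem. *)

From HB Require Import structures.
From mathcomp Require Import all_boot all_order all_algebra.
From mathcomp Require Import zify ring lra.
Set Implicit Arguments. Unset Strict Implicit. Unset Printing Implicit Defensive.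
Import Order.TTheory GRing.Theory Num.Theory.

(* An unordered pair {x, y} arises from at most two ordered pairs (x, y). *)
Lemma card_ordered_pairs {T : finType} (P : {set {set T}}) :
  (#|[set p : T * T | [set p.1; p.2] \in P]| <= 2 * #|P|)%N.
Proof.
set D := [set p : T * T | [set p.1; p.2] \in P].
pose f (p : T * T) := ([set p.1; p.2], (enum_rank p.1 < enum_rank p.2)%N).
have f_inj : {in D &, injective f}.
  move=> [a b] [c d] _ _ [ab_cd lt_ab] /=.
  have /set2P ha : a \in [set c; d] by rewrite -ab_cd set21.
  have /set2P hb : b \in [set c; d] by rewrite -ab_cd set22.
  have /set2P hc : c \in [set a; b] by rewrite ab_cd set21.
  have /set2P hd : d \in [set a; b] by rewrite ab_cd set22.
  case: ha => ?; case: hb => ?; case: hc => ?; case: hd => ?; subst => //.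
  have : enum_rank c = enum_rank d by apply/val_inj => /=; move: lt_ab; lia.
  by move/enum_rank_inj ->.
rewrite -(card_in_imset f_inj).
apply: (@leq_trans #|setX P [set: bool]|); last by rewrite cardsX cardsT card_bool mulnC.
apply: subset_leq_card; apply/subsetP => x /imsetP[p]; rewrite inE => pD ->.
by rewrite inE /= pD inE.
Qed.

Section Wedges.
Variables (V : finType) (e : rel V).
Hypothesis e_irr : irreflexive e.
Local Notation E := (edges e).
Local Notation W := (wedges e).

Lemma edgeP {b} : b \in E -> exists x y, x != y /\ b = [set x; y].
Proof.
rewrite inE => /existsP[x /existsP[y /andP[exy /eqP ->]]].
exists x, y; split => //; apply/eqP => xy; subst; by rewrite e_irr in exy.
Qed.

Lemma card_edge {b} : b \in E -> #|b| = 2.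
Proof. by case/edgeP => x [y [nxy ->]]; rewrite cards2 nxy. Qed.

Lemma wedgeP {b c} : [set b; c] \in W ->
  [/\ b \in E, c \in E, b != c & #|b :&: c| = 1].
Proof.
rewrite inE => /existsP[A /andP[AE /existsP[B /andP[BE /and3P[nAB /eqP cAB /eqP bc_AB]]]]].
have /set2P hb : b \in [set A; B] by rewrite -bc_AB set21.
have /set2P hc : c \in [set A; B] by rewrite -bc_AB set22.
have /set2P hA : A \in [set b; c] by rewrite bc_AB set21.
have /set2P hB : B \in [set b; c] by rewrite bc_AB set22.
case: hb => ?; case: hc => ?; case: hA => ?; case: hB => ?; subst; rewrite ?eqxx in nAB => //.
all: by split; rewrite // 1?eq_sym // setIC.
Qed.

Lemma wedge_mk {b c u} : b \in E -> c \in E -> b != c -> u \in b -> u \in c ->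
  [set b; c] \in W.
Proof.
move=> bE cE nbc ub uc.
have bc_gt0 : (0 < #|b :&: c|)%N by apply/card_gt0P; exists u; rewrite inE ub uc.
have bc_le2 : (#|b :&: c| <= 2)%N by rewrite -(card_edge bE) subset_leq_card // subsetIl.
have bc_neq2 : #|b :&: c| != 2.
  apply/eqP => bc2; move/negP: nbc; apply.
  have sbc : b \subset c by apply/setIidPl/eqP; rewrite eqEcard subsetIl bc2 (card_edge bE).
  by rewrite eqEcard sbc (card_edge bE) (card_edge cE).
rewrite inE; apply/existsP; exists b; rewrite bE /=; apply/existsP; exists c.
rewrite cE nbc /= eqxx andbT; apply/eqP; lia.
Qed.

Lemma wedge_two {b c u v} : [set b; c] \in W -> u != v ->
  u \in b -> u \in c -> v \in b -> v \in c -> False.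
Proof.
case/wedgeP => _ _ _ bc1 nuv ub uc vb vc.
have : (#|[set u; v]| <= #|b :&: c|)%N.
  by apply: subset_leq_card; apply/subsetP => w /set2P[]->; rewrite inE ?ub ?uc ?vb ?vc.
by rewrite cards2 nuv bc1.
Qed.

Definition wedge_pairs_at (w : V) : {set {set V} * {set V}} :=
  [set p | [&& [set p.1; p.2] \in W, w \in p.1 & w \in p.2]].

Lemma in_wedge_pairs_at w p :
  (p \in wedge_pairs_at w) = [&& [set p.1; p.2] \in W, w \in p.1 & w \in p.2].
Proof. by rewrite inE. Qed.

(* A wedge has a single centre, so wedge pairs at distinct vertices are
   disjoint families of ordered wedges. *)
Lemma wedge_pairs_at2 {u v} : u != v ->
  (#|wedge_pairs_at u| + #|wedge_pairs_at v| <= 2 * #|W|)%N.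
Proof.
move=> nuv.
have disj : wedge_pairs_at u :&: wedge_pairs_at v = set0.
  apply/setP => p; rewrite in_setI !in_wedge_pairs_at in_set0.
  apply/negP => /andP[/and3P[pW u1 u2] /and3P[_ v1 v2]].
  by have := wedge_two pW nuv u1 u2 v1 v2.
have := cardsU (wedge_pairs_at u) (wedge_pairs_at v).
rewrite disj cards0 subn0 => <-; apply: leq_trans _ (card_ordered_pairs W).
apply: subset_leq_card; apply/subsetP => p.
by rewrite in_setU !in_wedge_pairs_at [p \in _]inE => /orP[]/and3P[].
Qed.

(* If every edge of T forms a wedge centred at w with the fixed edge a, then
   T x T injects into the wedge pairs at w: (b, c) is itself a wedge pair when
   b != c, and the diagonal (b, b) is sent to (a, b). *)
Lemma star_sq_le {a : {set V}} {w : V} (T : {set {set V}}) : w \in a ->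
  (forall b, b \in T -> ([set a; b] \in W) && (w \in b)) ->
  (#|T| ^ 2 <= #|wedge_pairs_at w|)%N.
Proof.
move=> wa hT.
pose f (p : {set V} * {set V}) := if p.1 == p.2 then (a, p.1) else p.
have aT : a \notin T by apply/negP => /hT/andP[/wedgeP[_ _]]; rewrite eqxx.
have f_inj : {in setX T T &, injective f}.
  move=> [b c] [b' c']; rewrite !inE /f /= => /andP[bT cT] /andP[b'T c'T].
  case: eqP => [<-|_]; case: eqP => [<-|_] //.
  - by case=> ->.
  - by case=> eab _; rewrite eab b'T in aT.
  - by case=> eab _; rewrite -eab bT in aT.
rewrite expnS expn1 -cardsX -(card_in_imset f_inj).
apply: subset_leq_card; apply/subsetP => x /imsetP[[b c]].
rewrite inE /= => /andP[/hT/andP[abW wb] /hT/andP[acW wc]] ->.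
rewrite /f /= in_wedge_pairs_at; have [_|nbc] := eqVneq b c; first by rewrite /= abW wa wb.
have [_ bE _ _] := wedgeP abW; have [_ cE _ _] := wedgeP acW.
by rewrite (wedge_mk bE cE nbc wb wc) wb wc.
Qed.

Definition nbr (S : {set {set {set V}}}) (a : {set V}) : {set {set V}} :=
  [set b in E | [set a; b] \in S].

Lemma in_nbr S a b : (b \in nbr S a) = (b \in E) && ([set a; b] \in S).
Proof. by rewrite inE. Qed.

(* Every S-neighbour of a = {u, v} is centred at u or at v; hence
   d_S(a)^2 <= 2 (|N_u|^2 + |N_v|^2) <= 4 W. *)
Lemma nbr_sq_le (S : {set {set {set V}}}) a : S \subset W -> a \in E ->
  (#|nbr S a| ^ 2 <= 4 * #|W|)%N.
Proof.
move=> SW aE; have [u [v [nuv a_uv]]] := edgeP aE.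
pose N w := [set b in nbr S a | w \in b].
have N_sq w : w \in a -> (#|N w| ^ 2 <= #|wedge_pairs_at w|)%N.
  move=> wa; apply: (star_sq_le wa) => b.
  rewrite [b \in N w]inE in_nbr => /andP[/andP[_ abS] ->].
  by rewrite (subsetP SW _ abS).
have nbr_le : (#|nbr S a| <= #|N u| + #|N v|)%N.
  apply: (@leq_trans #|N u :|: N v|); last by rewrite cardsU leq_subr.
  apply: subset_leq_card; apply/subsetP => b bS; have := bS; rewrite in_nbr => /andP[_ abS].
  have [_ _ _ ab1] := wedgeP (subsetP SW _ abS).
  have /card_gt0P[w] : (0 < #|a :&: b|)%N by rewrite ab1.
  rewrite in_setI in_setU [b \in N u]inE [b \in N v]inE bS a_uv.
  by case/andP => /set2P[]-> ->; rewrite ?orbT.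
have := N_sq u; have := N_sq v; have := wedge_pairs_at2 nuv.
have [cauchy _] := nat_Cauchy #|N u| #|N v|; move: cauchy nbr_le.
rewrite a_uv set21 set22 !expnS !expn0 !muln1; nia.
Qed.

End Wedges.

Local Open Scope ring_scope.

Section Sampling.
Variables (R : numFieldType) (V : finType) (e : rel V) (s : nat).
Local Notation E := (edges e).
Local Notation Om := (samples e s).
Local Notation m := #|edges e|.
Local Notation sample := {ffun 'I_s -> {set V}}.

Lemma expect_sum (I : finType) (P : pred I) (f : I -> sample -> R) :
  expect e (fun r => \sum_(i | P i) f i r) = \sum_(i | P i) expect e (f i).
Proof. by rewrite /expect exchange_big mulr_suml. Qed.

Lemma eq_expect (f g : sample -> R) : f =1 g -> expect e f = expect e g.
Proof. by move=> fg; rewrite /expect (eq_bigr _ (fun r _ => fg r)). Qed.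

Lemma expectZl (c : R) (f : sample -> R) :
  expect e (fun r => c * f r) = c * expect e f.
Proof. by rewrite /expect -mulr_sumr mulrA. Qed.

Lemma expect_ge0 (f : sample -> R) : (forall r, 0 <= f r) -> 0 <= expect e f.
Proof. by move=> f_ge0; rewrite divr_ge0 ?ler0n ?sumr_ge0. Qed.

(* As soon as the graph has an edge, the sample space is nonempty. *)
Lemma expect_cst (c : R) : (0 < m)%N -> expect e (fun _ : sample => c) = c.
Proof.
case/card_gt0P => a aE.
have Om_gt0 : (0 < #|Om|)%N.
  by apply/card_gt0P; exists [ffun=> a]; rewrite inE; apply/forallP => i; rewrite ffunE.
by rewrite /expect sumr_const -[c *+ _]mulr_natr mulfK // pnatr_eq0 -lt0n.
Qed.

Definition upd (r : sample) (i : 'I_s) (x : {set V}) : sample :=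
  [ffun t => if t == i then x else r t].

Lemma upd_ne (r : sample) i x t : t != i -> upd r i x t = r t.
Proof. by rewrite ffunE => /negbTE ->. Qed.

Lemma upd_at (r : sample) i x : upd r i x i = x.
Proof. by rewrite ffunE eqxx. Qed.

Lemma upd_upd (r : sample) i x y : upd (upd r i x) i y = upd r i y.
Proof. by apply/ffunP => t; rewrite !ffunE; case: eqP. Qed.

Lemma upd_id (r : sample) i : upd r i (r i) = r.
Proof. by apply/ffunP => t; rewrite ffunE; case: eqP => [->|]. Qed.

Lemma upd_in_samples (r : sample) i x : x \in E -> r i \in E -> (upd r i x \in Om) = (r \in Om).
Proof.
move=> xE riE; rewrite !inE; apply/forallP/forallP => rE t; have := rE t;
  by rewrite ffunE; case: eqP => // ->.
Qed.

Lemma sum_fiber (i : 'I_s) (G : sample -> R) a b :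
  (forall r x, G (upd r i x) = G r) -> a \in E -> b \in E ->
  \sum_(r in Om | r i == a) G r = \sum_(r in Om | r i == b) G r.
Proof.
move=> Ginv aE bE.
rewrite (reindex_onto (fun r => upd r i a) (fun r => upd r i b)) /=; last first.
  by move=> r /andP[_ /eqP <-]; rewrite upd_upd upd_id.
apply: eq_big => [r|r _]; last exact: Ginv.
rewrite upd_upd upd_at eqxx andbT; have [rib|nrb] := eqVneq (r i) b.
  by rewrite -rib upd_id eqxx !andbT upd_in_samples // rib.
rewrite andbF; apply/negbTE/negP => /andP[_ /eqP ur].
by move/eqP: nrb; apply; rewrite -ur upd_at.
Qed.

(* Conditioning on coordinate i: r i is uniform on the edges and
   independent of the other coordinates. *)
Lemma expect_coord (i : 'I_s) (F : {set V} -> sample -> R) :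
  (forall a r x, F a (upd r i x) = F a r) ->
  expect e (fun r => F (r i) r) = m%:R^-1 * \sum_(a in E) expect e (F a).
Proof.
move=> Finv.
have part (G : sample -> R) :
    \sum_(r in Om) G r = \sum_(a in E) \sum_(r in Om | r i == a) G r.
  by apply: partition_big => r; rewrite inE => /forallP.
have fiber a : a \in E ->
    \sum_(r in Om) F a r = m%:R * \sum_(r in Om | r i == a) F a r.
  move=> aE; rewrite part (eq_bigr (fun=> \sum_(r in Om | r i == a) F a r)).
    by rewrite sumr_const mulr_natl.
  by move=> b bE; apply: sum_fiber.
rewrite /expect part -mulr_suml mulrA; congr (_ / _).
rewrite mulr_sumr; apply: eq_bigr => a aE.
have m_neq0 : m%:R != 0 :> R by rewrite pnatr_eq0 -lt0n; apply/card_gt0P; exists a.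
by rewrite fiber // mulKf //; apply: eq_bigr => r /andP[_ /eqP->].
Qed.

Lemma expect_coord2 (i j : 'I_s) (F : {set V} -> {set V} -> sample -> R) :
  i != j -> (forall a b r x, F a b (upd r i x) = F a b r) ->
  (forall a b r x, F a b (upd r j x) = F a b r) ->
  expect e (fun r => F (r i) (r j) r) =
    (m%:R ^+ 2)^-1 * \sum_(a in E) \sum_(b in E) expect e (F a b).
Proof.
move=> nij Fi Fj.
rewrite (expect_coord (F := fun a r => F a (r j) r)); last first.
  by move=> a r x; rewrite Fi upd_ne // eq_sym.
rewrite -exprVn expr2 -mulrA; congr (_ * _); rewrite mulr_sumr; apply: eq_bigr => a _.
by rewrite (expect_coord (F := F a)).
Qed.

End Sampling.

Lemma sumr_le_all (R : numDomainType) (I : finType) (P : pred I) (F : I -> R) :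
  (forall i, 0 <= F i) -> \sum_(i | P i) F i <= \sum_i F i.
Proof. by move=> F_ge0; rewrite big_mkcond ler_sum // => i _; case: ifP. Qed.

Section Overlaps.
Variable s : nat.

Definition overlap (P Q : 'I_s * 'I_s) : nat :=
  ((P.1 == Q.1) + (P.1 == Q.2) + (P.2 == Q.1) + (P.2 == Q.2))%N.

Lemma sum_eq1 (i : 'I_s) : (\sum_(a : 'I_s) (i == a))%N = 1%N.
Proof. by rewrite (bigD1 i) //= eqxx big1 // => a; rewrite eq_sym => /negbTE ->. Qed.

Lemma sum_eq_fst (i : 'I_s) : (\sum_(Q : 'I_s * 'I_s) (i == Q.1))%N = s.
Proof.
rewrite -(pair_bigA _ (fun a _ => nat_of_bool (i == a))) /=.
under eq_bigr do rewrite sum_nat_const card_ord.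
by rewrite -big_distrr /= sum_eq1 muln1.
Qed.

Lemma sum_eq_snd (i : 'I_s) : (\sum_(Q : 'I_s * 'I_s) (i == Q.2))%N = s.
Proof.
rewrite -(pair_bigA _ (fun _ b => nat_of_bool (i == b))) /=.
by under eq_bigr do rewrite sum_eq1; rewrite sum_nat_const card_ord muln1.
Qed.

Lemma sum_overlap (P : 'I_s * 'I_s) : (\sum_(Q : 'I_s * 'I_s) overlap P Q)%N = (4 * s)%N.
Proof. by rewrite !big_split /= !sum_eq_fst !sum_eq_snd; lia. Qed.

End Overlaps.

Section Moments.
Variables (R : numFieldType) (V : finType) (e : rel V) (s : nat).
Variable S : {set {set {set V}}}.
Hypothesis m_gt0 : (0 < #|edges e|)%N.
Local Notation E := (edges e).
Local Notation m := #|edges e|.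
Local Notation sample := {ffun 'I_s -> {set V}}.

Definition inS (a b : {set V}) : R := ([set a; b] \in S)%:R.

Definition degS (a : {set V}) : R := \sum_(b in E) inS a b.
Definition pairsS : R := \sum_(a in E) degS a.
Definition deg2S : R := \sum_(a in E) degS a ^+ 2.

Lemma inSC a b : inS a b = inS b a.
Proof. by rewrite /inS setUC. Qed.

Lemma inS_ge0 a b : 0 <= inS a b.
Proof. exact: ler0n. Qed.

Lemma inS_sq a b : inS a b * inS a b = inS a b.
Proof. by rewrite /inS; case: ([set a; b] \in S); rewrite ?mulr1 ?mulr0. Qed.

Lemma degS_ge0 a : 0 <= degS a.
Proof. by apply: sumr_ge0 => b _; apply: inS_ge0. Qed.

Lemma pairsS_ge0 : 0 <= pairsS.
Proof. by apply: sumr_ge0 => a _; apply: degS_ge0. Qed.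

Lemma deg2S_ge0 : 0 <= deg2S.
Proof. by apply: sumr_ge0 => a _; rewrite exprn_ge0 ?degS_ge0. Qed.

(* The values of E[Y] for a pair of distinct coordinates and of E[Y Y'] for
   two pairs sharing exactly one coordinate (computed below). *)
Definition mean_pair : R := (m%:R ^+ 2)^-1 * pairsS.
Definition mean_star : R := (m%:R ^+ 3)^-1 * deg2S.

Lemma mean_pair_ge0 : 0 <= mean_pair.
Proof. by rewrite mulr_ge0 ?invr_ge0 ?exprn_ge0 ?ler0n ?pairsS_ge0. Qed.

Lemma mean_star_ge0 : 0 <= mean_star.
Proof. by rewrite mulr_ge0 ?invr_ge0 ?exprn_ge0 ?ler0n ?deg2S_ge0. Qed.

Lemma expect_pair (i j : 'I_s) : i != j ->
  expect e (fun r : sample => inS (r i) (r j)) = mean_pair.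
Proof.
move=> nij; rewrite (expect_coord2 e (F := fun a b _ => inS a b)) //.
congr (_ * _); apply: eq_bigr => a _; apply: eq_bigr => b _; exact: expect_cst.
Qed.

Lemma expect_star (i j k : 'I_s) : i != j -> i != k -> j != k ->
  expect e (fun r : sample => inS (r i) (r j) * inS (r i) (r k)) = mean_star.
Proof.
move=> nij nik njk.
rewrite (expect_coord e (F := fun a r => inS a (r j) * inS a (r k))); last first.
  by move=> a r x; rewrite !upd_ne // eq_sym.
have star a : expect e (fun r : sample => inS a (r j) * inS a (r k))
    = (m%:R ^+ 2)^-1 * degS a ^+ 2.
  rewrite (expect_coord2 e (F := fun b c _ => inS a b * inS a c)) //.
  rewrite [degS a ^+ 2]expr2 /degS mulr_suml; congr (_ * _).
  apply: eq_bigr => b _; rewrite mulr_sumr; apply: eq_bigr => c _.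
  by rewrite expect_cst.
under eq_bigr do rewrite star.
by rewrite -mulr_sumr mulrA -invfM -exprS.
Qed.

Lemma expect_indep (i j k l : 'I_s) :
  i != j -> i != k -> i != l -> j != k -> j != l -> k != l ->
  expect e (fun r : sample => inS (r i) (r j) * inS (r k) (r l))
    = expect e (fun r : sample => inS (r i) (r j))
      * expect e (fun r : sample => inS (r k) (r l)).
Proof.
move=> nij nik nil njk njl nkl.
rewrite (expect_coord2 e (F := fun a b r => inS a b * inS (r k) (r l))) //; last first.
- by move=> a b r x; rewrite !upd_ne // eq_sym.
- by move=> a b r x; rewrite !upd_ne // eq_sym.
rewrite (expect_pair nij) -mulrA; congr (_ * _); rewrite mulr_suml.
by apply: eq_bigr => a _; rewrite mulr_suml; apply: eq_bigr => b _; rewrite expectZl.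
Qed.

Definition Y (P : 'I_s * 'I_s) (r : sample) : R := inS (r P.1) (r P.2).

Lemma Xcount_sum (r : sample) :
  (Xcount S r)%:R = \sum_(P : 'I_s * 'I_s | (P.1 < P.2)%N) Y P r.
Proof.
rewrite /Xcount -sum1_card natr_sum big_mkcond [RHS]big_mkcond /=.
by apply: eq_bigr => P _; rewrite inE /Y /inS; case: (P.1 < P.2)%N; case: ([set _; _] \in S).
Qed.

Definition cov (P Q : 'I_s * 'I_s) : R :=
  expect e (fun r => Y P r * Y Q r) - expect e (Y P) * expect e (Y Q).

Lemma varX_cov : varX R e s S =
  \sum_(P : 'I_s * 'I_s | (P.1 < P.2)%N) \sum_(Q : 'I_s * 'I_s | (Q.1 < Q.2)%N) cov P Q.
Proof.
rewrite /varX (eq_expect e (g := fun r => \sum_(P : 'I_s * 'I_s | (P.1 < P.2)%N)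
    \sum_(Q : 'I_s * 'I_s | (Q.1 < Q.2)%N) Y P r * Y Q r)); last first.
  move=> r; rewrite Xcount_sum expr2 mulr_suml.
  by apply: eq_bigr => P _; rewrite mulr_sumr.
rewrite (eq_expect e Xcount_sum) !expect_sum expr2 mulr_suml -sumrB.
by apply: eq_bigr => P _; rewrite expect_sum mulr_sumr -sumrB.
Qed.

(* Indicators have nonnegative means, so cov P Q <= E[Y_P Y_Q]. *)
Lemma cov_le_moment (P Q : 'I_s * 'I_s) : cov P Q <= expect e (fun r => Y P r * Y Q r).
Proof.
rewrite /cov lerBlDr lerDl mulr_ge0 // expect_ge0 // => r; exact: inS_ge0.
Qed.

(* Distinct increasing pairs sharing an index share exactly one, and their
   joint moment is a star moment. *)
Lemma expect_overlap (P Q : 'I_s * 'I_s) : (P.1 < P.2)%N -> (Q.1 < Q.2)%N -> P != Q ->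
  (0 < overlap P Q)%N -> expect e (fun r => Y P r * Y Q r) = mean_star.
Proof.
case: P Q => [i j] [k l]; rewrite /overlap /Y xpair_eqE /= => ij kl nPQ ov.
have [ik|nik] := eqVneq i k.
  subst k; move: nPQ; rewrite eqxx /= => njl.
  by apply: expect_star => //; rewrite -val_eqE /=; lia.
have [il|nil] := eqVneq i l.
  subst l; rewrite (eq_expect e (g := fun r => inS (r i) (r j) * inS (r i) (r k))).
    by apply: expect_star; rewrite -val_eqE /=; lia.
  by move=> r; rewrite [inS (r k) _]inSC.
have [jk|njk] := eqVneq j k.
  subst k; rewrite (eq_expect e (g := fun r => inS (r j) (r i) * inS (r j) (r l))).
    by apply: expect_star; rewrite -val_eqE /=; lia.
  by move=> r; rewrite [inS (r i) _]inSC.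
move: ov; rewrite (negbTE nik) (negbTE nil) (negbTE njk) !add0n lt0b => /eqP jl; subst l.
rewrite (eq_expect e (g := fun r => inS (r j) (r i) * inS (r j) (r k))).
  by apply: expect_star => //; rewrite -val_eqE /=; lia.
by move=> r; rewrite [inS (r i) _]inSC [inS (r k) _]inSC.
Qed.

Lemma cov_le (P Q : 'I_s * 'I_s) : (P.1 < P.2)%N -> (Q.1 < Q.2)%N ->
  cov P Q <= (P == Q)%:R * mean_pair + (overlap P Q)%:R * mean_star.
Proof.
move=> hP hQ; have A_ge0 := mean_pair_ge0; have B_ge0 := mean_star_ge0.
have [<-|nPQ] := eqVneq P Q.
  apply: le_trans (cov_le_moment P P) _.
  rewrite (eq_expect e (g := Y P)) => [|r]; last exact: inS_sq.
  rewrite /Y expect_pair; last by move: hP; rewrite -val_eqE /=; lia.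
  by rewrite mul1r lerDl mulr_ge0 ?ler0n.
have [ov0|ov_pos] := posnP (overlap P Q).
  have -> : cov P Q = 0.
    move: ov0 hP hQ; case: P {nPQ} => i j; case: Q => k l /=.
    move/eqP; rewrite /overlap /= !addn_eq0 !eqb0 => /andP[/andP[/andP[nik nil] njk] njl] ij kl.
    by rewrite /cov /Y /= expect_indep ?subrr //; rewrite -val_eqE /=; lia.
  by apply: addr_ge0; apply: mulr_ge0; rewrite ?ler0n.
apply: le_trans (cov_le_moment P Q) _.
by rewrite expect_overlap // mul0r add0r ler_peMl // ler1n.
Qed.

(* Summing the covariance bounds over the s^2 index pairs P, each of which
   meets 4 s pairs Q. *)
Lemma varX_le : varX R e s S <= s%:R ^+ 2 * mean_pair + 4 * s%:R ^+ 3 * mean_star.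
Proof.
set A := mean_pair; set B := mean_star.
pose w (P Q : 'I_s * 'I_s) := (P == Q)%:R * A + (overlap P Q)%:R * B.
have A_ge0 : 0 <= A := mean_pair_ge0; have B_ge0 : 0 <= B := mean_star_ge0.
have w_ge0 P Q : 0 <= w P Q by rewrite addr_ge0 // mulr_ge0 ?ler0n.
have row_sum P : \sum_Q w P Q = A + 4 * s%:R * B.
  rewrite big_split -!mulr_suml /= -!natr_sum sum_overlap natrM.
  by rewrite (bigD1 P) //= eqxx big1 ?addn0 ?mul1r // => Q /negbTE; rewrite eq_sym => ->.
rewrite varX_cov; apply: le_trans (_ : _ <= \sum_P \sum_Q w P Q) _.
  apply: le_trans (sumr_le_all _ (fun P => sumr_ge0 _ (fun Q _ => w_ge0 P Q))).
  apply: ler_sum => P hP; apply: le_trans (sumr_le_all _ (w_ge0 P)).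
  by apply: ler_sum => Q hQ; apply: cov_le.
under eq_bigr do rewrite row_sum.
rewrite sumr_const card_prod card_ord -[_ *+ _]mulr_natr natrM.
by rewrite [X in X <= _](_ : _ = s%:R ^+ 2 * A + 4 * s%:R ^+ 3 * B) //; ring.
Qed.

End Moments.

Section Bounds.
Variables (R : rcfType) (V : finType) (e : rel V) (S : {set {set {set V}}}).
Hypothesis e_irr : irreflexive e.
Hypothesis SW : S \subset wedges e.
Local Notation E := (edges e).
Local Notation W := (#|wedges e|%:R : R).

Lemma degS_card a : degS R e S a = #|nbr e S a|%:R.
Proof.
rewrite /degS -sum1_card natr_sum big_mkcond [RHS]big_mkcond /=.
apply: eq_bigr => b _; rewrite in_nbr /inS.
by case: (b \in E); case: ([set a; b] \in S).
Qed.

(* Each wedge of S is counted twice among ordered pairs of edges. *)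
Lemma pairsS_le : pairsS R e S <= 2 * W.
Proof.
rewrite /pairsS /degS pair_big /=.
apply: le_trans (sumr_le_all _ (fun p => inS_ge0 R S p.1 p.2)) _.
have -> : \sum_(p : {set V} * {set V}) inS R S p.1 p.2
    = #|[set p : {set V} * {set V} | [set p.1; p.2] \in S]|%:R.
  rewrite -sum1_card natr_sum [RHS]big_mkcond.
  by apply: eq_bigr => p _; rewrite inE /inS; case: ([set p.1; p.2] \in S).
rewrite -natrM ler_nat (leq_trans (card_ordered_pairs S)) // leq_mul2l.
exact: subset_leq_card.
Qed.

(* d_S(a) <= 2 sqrt W for every edge, hence sum_a d_S(a)^2 <= 2 sqrt W * 2 W. *)
Lemma deg2S_le : deg2S R e S <= 4 * W * Num.sqrt W.
Proof.
have W_ge0 : 0 <= W by rewrite ler0n.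
have q_ge0 : 0 <= Num.sqrt W by rewrite sqrtr_ge0.
have qq : Num.sqrt W ^+ 2 = W by rewrite sqr_sqrtr.
have deg_le a : a \in E -> degS R e S a <= 2 * Num.sqrt W.
  move=> aE; have := nbr_sq_le e_irr SW aE; rewrite degS_card.
  rewrite -(ler_nat R) natrX natrM => d_sq; have := ler0n R #|nbr e S a|; nra.
apply: (@le_trans _ _ (2 * Num.sqrt W * pairsS R e S)).
  rewrite /deg2S /pairsS mulr_sumr; apply: ler_sum => a aE.
  by rewrite expr2 ler_wpM2r ?degS_ge0 ?deg_le.
have := pairsS_le; have := pairsS_ge0 R e S; nra.
Qed.

End Bounds.

(* Without edges there are no samples with a pair of indices, so X = 0. *)
Lemma varX_no_edges (R : numFieldType) (V : finType) (e : rel V) (s : nat)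
    (S : {set {set {set V}}}) :
  #|edges e| = 0%N -> varX R e s S = 0.
Proof.
move=> m0.
have X0 r : r \in samples e s -> Xcount S r = 0%N.
  move=> rOm; apply/eqP; rewrite cards_eq0; apply/eqP/setP => ij.
  rewrite in_set0; apply/negP => _.
  by move: rOm; rewrite inE => /forallP /(_ ij.1); rewrite (cards0_eq m0) in_set0.
by rewrite /varX /expect !big1 ?mul0r ?expr0n ?subr0 // => r /X0 ->; rewrite ?expr0n.
Qed.

(* The final estimate, using m <= s sqrt W to absorb the diagonal term. *)
Lemma variance_arith (R : rcfType) (s m W P D : R) :
  0 < m -> 0 < W -> 0 <= s -> m / Num.sqrt W <= s ->
  0 <= P -> P <= 2 * W -> 0 <= D -> D <= 4 * W * Num.sqrt W ->
  s ^+ 2 * ((m ^+ 2)^-1 * P) + 4 * s ^+ 3 * ((m ^+ 3)^-1 * D)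
    <= 18 * s ^+ 3 * (W * Num.sqrt W) / m ^+ 3.
Proof.
move=> m_gt0 W_gt0 s_ge0 m_le P_ge0 P_le D_ge0 D_le.
have q_gt0 : 0 < Num.sqrt W by rewrite sqrtr_gt0.
have m_le_sq : m <= s * Num.sqrt W by rewrite -ler_pdivrMr.
have -> : s ^+ 2 * ((m ^+ 2)^-1 * P) + 4 * s ^+ 3 * ((m ^+ 3)^-1 * D)
    = (s ^+ 2 * (P * m) + 4 * s ^+ 3 * D) / m ^+ 3.
  by field; rewrite gt_eqF.
apply: ler_wpM2r; first by rewrite invr_ge0 exprn_ge0 // ltW.
have Pm : P * m <= 2 * W * (s * Num.sqrt W) by rewrite ler_pM // ltW.
have := ler_wpM2l (exprn_ge0 2 s_ge0) Pm.
have := ler_wpM2l (mulr_ge0 (ler0n R 4) (exprn_ge0 3 s_ge0)) D_le.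
move=> h1 h2; apply: le_trans (lerD h2 h1) _.
by rewrite [X in X <= _](_ : _ = 18 * s ^+ 3 * (W * Num.sqrt W)) //; ring.
Qed.

Theorem mainTheorem3 (R : rcfType) (V : finType) (e : rel V)
    (S : {set {set {set V}}}) (s : nat) :
  symmetric e -> irreflexive e ->
  S \subset wedges e ->
  (#|edges e| <= #|wedges e|)%N ->
  (#|edges e|)%:R / Num.sqrt ((#|wedges e|)%:R) <= (s%:R : R) ->
  varX R e s S <=
    18 * s%:R ^+ 3 * ((#|wedges e|)%:R * Num.sqrt ((#|wedges e|)%:R))
       / (#|edges e|)%:R ^+ 3.
Proof.
move=> _ e_irr SW m_le_W m_le_sW.
have [m0|m_gt0] := posnP #|edges e|.
  by rewrite varX_no_edges // m0 expr0n /= invr0 mulr0.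
apply: le_trans (varX_le R s S m_gt0) _; rewrite /mean_pair /mean_star.
apply: variance_arith; rewrite ?ltr0n ?ler0n ?(leq_trans m_gt0) //.
- exact: pairsS_ge0.
- exact: pairsS_le.
- exact: deg2S_ge0.
- exact: deg2S_le.
Qed.
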